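(* Let $A_1,\dots,A_k,A$ be formulas of $\mathcal{L}_\infty$ and $m_1,\dots,m_k,n$ natural numbers such that $\Box_{m_i}A_i$ ($1\le i\le k$) and $\Box_nA$ are formulas of $\mathcal{L}_\infty$. (i) If $\bigwedge_{i=1}^k\Box_{m_i}A_i\vdash_{\mathbf{K4}_h}A$ and $m_i\le n$ for all $i$, then $\bigwedge_{i=1}^k\Box_{m_i}A_i\vdash_{\mathbf{K4}_h}\Box_nA$. (ii) If $\bigwedge_{i=1}^k\Box_{m_i}A_i\vdash_{\mathbf{S4}_h}A$ and $m_i\le n$ for all $i$, then $\bigwedge_{i=1}^k\Box_{m_i}A_i\vdash_{\mathbf{S4}_h}\Box_nA$.
   Context: The language $\mathcal{L}_\infty$ consists of modal formulas built from propositional atoms, $\bot,\top$, the connectives $\neg,\wedge,\vee,\rightarrow$ and unary modalities $\Box_n$ ($n\in\mathbb{N}$), with the restriction that $\Box_n A$ is a formula only if $n$ is strictly greater than the index of every box occurring in $A$. All formulas are in $\mathcal{L}_\infty$; axiom instances are only those that are $\mathcal{L}_\infty$-formulas. Axiom schemes (for all $n\ge0$): $\mathbf{H}$: $\Box_n A\rightarrow\Box_{n+1}A$; $\mathbf{K}_h$: $\Box_n(A\rightarrow B)\rightarrow(\Box_nA\rightarrow\Box_nB)$; $\mathbf{4}_h$: $\Box_nA\rightarrow\Box_{n+1}\Box_nA$; $\mathbf{T}_h$: $\Box_nA\rightarrow A$. For a set $X$ of schemes, $L(X)$ is the least set of $\mathcal{L}_\infty$-formulas containing all classical propositional tautologies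 and all instances of the schemes in $X$, closed under modus ponens and the rule: from $A$ infer $\Box_nA$ for any $n$ greater than all box indices in $A$. $\mathbf{K4}_h=L(\mathbf{H},\mathbf{K}_h,\mathbf{4}_h)$, $\mathbf{S4}_h=L(\mathbf{H},\mathbf{K}_h,\mathbf{4}_h,\mathbf{T}_h)$. For a set $\Gamma$ of formulas, $\Gamma\vdash_{L}A$ means there is a finite $\Delta\subseteq\Gamma$ with $\bigwedge\Delta\rightarrow A\in L$. *)

From Stdlib Require Import List Arith.
Import ListNotations.

(* Raw modal formulas; well-formedness (the L_infinity restriction) is a separate predicate. *)
Inductive form : Type :=
| Var : nat -> form
| Bot : form
| Top : form
| Neg : form -> form
| And : form -> form -> form
| Or  : form -> form -> form
| Imp : form -> form -> form
| Box : nat -> form -> form.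

Fixpoint boxes_below (n : nat) (A : form) : Prop :=
  match A with
  | Var _ | Bot | Top => True
  | Neg B => boxes_below n B
  | And B C | Or B C | Imp B C => boxes_below n B /\ boxes_below n C
  | Box m B => m < n /\ boxes_below n B
  end.

Fixpoint wf (A : form) : Prop :=
  match A with
  | Var _ | Bot | Top => True
  | Neg B => wf B
  | And B C | Or B C | Imp B C => wf B /\ wf C
  | Box n B => boxes_below n B /\ wf B
  end.

(* Classical valuation: atoms and boxed formulas are treated as propositional letters *)
Fixpoint eval (v : form -> bool) (A : form) : bool :=
  match A with
  | Var p => v (Var p)
  | Bot => false
  | Top => true
  | Neg B => negb (eval v B)
  | And B C => andb (eval v B) (eval v C)
  | Or B C => orb (eval v B) (eval v C)
  | Imp B C => implb (eval v B) (eval v C)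
  | Box n B => v (Box n B)
  end.

Definition tautology (A : form) : Prop := forall v : form -> bool, eval v A = true.

Inductive scheme : Type := SH | SK | S4 | ST.

Definition instance (s : scheme) (F : form) : Prop :=
  match s with
  | SH => exists n A, F = Imp (Box n A) (Box (S n) A)
  | SK => exists n A B, F = Imp (Box n (Imp A B)) (Imp (Box n A) (Box n B))
  | S4 => exists n A, F = Imp (Box n A) (Box (S n) (Box n A))
  | ST => exists n A, F = Imp (Box n A) A
  end.

Inductive L (X : scheme -> Prop) : form -> Prop :=
| L_taut : forall A, wf A -> tautology A -> L X A
| L_ax : forall s A, X s -> wf A -> instance s A -> L X A
| L_mp : forall A B, L X A -> L X (Imp A B) -> L X B
| L_nec : forall n A, L X A -> boxes_below n A -> L X (Box n A).

Definition K4h_schemes (s : scheme) : Prop := s = SH \/ s = SK \/ s = S4.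
Definition S4h_schemes (s : scheme) : Prop := s = SH \/ s = SK \/ s = S4 \/ s = ST.

Definition K4h : form -> Prop := L K4h_schemes.
Definition S4h : form -> Prop := L S4h_schemes.

Fixpoint bigand (D : list form) : form :=
  match D with
  | [] => Top
  | B :: D' => And B (bigand D')
  end.

Definition derives (Lg : form -> Prop) (Gamma : form -> Prop) (A : form) : Prop :=
  exists D : list form, (forall B, In B D -> Gamma B) /\ Lg (Imp (bigand D) A).

Definition boxed_premises (ps : list (nat * form)) : form -> Prop :=
  fun B => In B (map (fun p => Box (fst p) (snd p)) ps).

From Stdlib Require Import List Arith Lia.
Import ListNotations.

(* Under [Box n] only boxes of index below [n] may occur, so the outer boxes of
   index [>= n] in a derivation of [/\ Delta -> A] have to be removed first:
   [collapse] erases them (sound in S4_h by T) or replaces them by [Top]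
   (in K4_h).  This translation preserves the logic and fixes [A], giving a
   derivation of [/\ collapse Delta -> A] to which necessitation at [n] applies.
   Each premise [Box m C] with [m <= n] implies [Box n (collapse (Box m C))]:
   for [m < n] via axiom 4 and a chain of H axioms, for [m = n] because that
   collapse is [C] itself or [Top]. *)

Ltac decide_tautology :=
  let v := fresh "v" in
  intro v; simpl;
  repeat match goal with
         | |- context [?f ?B] =>
             match type of f with form -> bool => destruct (f B) end
         end;
  reflexivity.

Lemma boxes_below_mono A : forall m n, m <= n -> boxes_below m A -> boxes_below n A.
Proof. induction A; simpl; intuition eauto; lia. Qed.

Lemma wf_Box_boxes_below k n B : wf (Box k B) -> k <= n -> boxes_below n B.
Proof. intros [HB _] Hkn. exact (boxes_below_mono B k n Hkn HB). Qed.

Fixpoint collapse (t : bool) (n : nat) (A : form) : form :=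
  match A with
  | Var p => Var p
  | Bot => Bot
  | Top => Top
  | Neg B => Neg (collapse t n B)
  | And B C => And (collapse t n B) (collapse t n C)
  | Or B C => Or (collapse t n B) (collapse t n C)
  | Imp B C => Imp (collapse t n B) (collapse t n C)
  | Box k B => if n <=? k then (if t then collapse t n B else Top) else Box k B
  end.

Lemma collapse_id t n A : boxes_below n A -> collapse t n A = A.
Proof.
  induction A; simpl; intuition; try congruence.
  destruct (Nat.leb_spec n n0); [lia | reflexivity].
Qed.

Lemma wf_collapse t n A : wf A -> wf (collapse t n A).
Proof.
  induction A; simpl; intuition.
  destruct (Nat.leb_spec n n0), t; simpl; auto.
Qed.

Lemma collapse_boxes_below t n A : wf A -> boxes_below n (collapse t n A).
Proof.
  induction A; simpl; intuition.
  destruct (Nat.leb_spec n n0), t; simpl; auto;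
    (split; [lia | apply (boxes_below_mono A n0); [lia | assumption]]).
Qed.

Lemma eval_collapse t n v A :
  eval v (collapse t n A) = eval (fun B => eval v (collapse t n B)) A.
Proof. induction A; simpl; congruence. Qed.

Lemma collapse_bigand t n D : collapse t n (bigand D) = bigand (map (collapse t n) D).
Proof. induction D; simpl; congruence. Qed.

Section Derivations.
Variable X : scheme -> Prop.

Lemma L_wf A : L X A -> wf A.
Proof. induction 1; simpl in *; intuition. Qed.

Lemma L_mp_chain Ps Q :
  (forall P, In P Ps -> L X P) -> L X (fold_right Imp Q Ps) -> L X Q.
Proof.
  induction Ps as [|P Ps IH]; simpl; auto.
  intros HPs HQ. apply IH; auto. exact (L_mp _ _ _ (HPs P (or_introl eq_refl)) HQ).
Qed.

Lemma L_tautological Ps Q :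
  (forall P, In P Ps -> L X P) -> wf Q -> tautology (fold_right Imp Q Ps) -> L X Q.
Proof.
  intros HPs HQ Htaut. apply (L_mp_chain Ps); auto.
  apply L_taut; auto.
  clear Htaut. induction Ps as [|P Ps IH]; simpl in *; auto.
  split; [apply L_wf | apply IH]; auto.
Qed.

Lemma L_imp_trans A B C : L X (Imp A B) -> L X (Imp B C) -> L X (Imp A C).
Proof.
  intros HAB HBC. pose proof (L_wf _ HAB); pose proof (L_wf _ HBC).
  apply (L_tautological [Imp A B; Imp B C]).
  - simpl; intuition congruence.
  - simpl in *; tauto.
  - decide_tautology.
Qed.

Lemma L_box_top n : L X (Box n Top).
Proof. apply L_nec; [apply L_taut; [exact I | decide_tautology] | exact I]. Qed.

Hypothesis XH : X SH.
Hypothesis XK : X SK.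
Hypothesis X4 : X S4.

Lemma L_K k A B : wf (Box k (Imp A B)) ->
  L X (Imp (Box k (Imp A B)) (Imp (Box k A) (Box k B))).
Proof. intros Hw. apply L_ax with SK; auto; simpl in *; [tauto | eauto]. Qed.

Lemma L_box_mono k A B :
  L X (Imp A B) -> boxes_below k (Imp A B) -> L X (Imp (Box k A) (Box k B)).
Proof.
  intros HAB Hk. pose proof (L_wf _ HAB).
  apply (L_mp _ _ _ (L_nec _ k _ HAB Hk)), L_K. split; assumption.
Qed.

Lemma L_box_and k A B : wf (Box k A) -> wf (Box k B) ->
  L X (Imp (And (Box k A) (Box k B)) (Box k (And A B))).
Proof.
  simpl; intros HA HB.
  assert (Hpair : L X (Imp A (Imp B (And A B))))
    by (apply L_taut; [simpl; tauto | decide_tautology]).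
  apply (L_tautological [Box k (Imp A (Imp B (And A B)));
                         Imp (Box k (Imp A (Imp B (And A B))))
                             (Imp (Box k A) (Box k (Imp B (And A B))));
                         Imp (Box k (Imp B (And A B))) (Imp (Box k B) (Box k (And A B)))]).
  - simpl; intros P [<- | [<- | [<- | []]]].
    + apply L_nec; [exact Hpair | simpl; tauto].
    + apply L_K; simpl; tauto.
    + apply L_K; simpl; tauto.
  - simpl; tauto.
  - decide_tautology.
Qed.

Lemma L_box_index_mono j k Y : j <= k -> wf (Box j Y) -> L X (Imp (Box j Y) (Box k Y)).
Proof.
  intros Hjk Hw. induction Hjk as [|k Hjk IH].
  - apply L_taut; [simpl in *; tauto | decide_tautology].
  - apply (L_imp_trans _ _ _ IH), L_ax with SH; [assumption | | simpl; eauto].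
    simpl in *. pose proof (wf_Box_boxes_below j k Y Hw Hjk).
    pose proof (wf_Box_boxes_below j (S k) Y Hw (le_S _ _ Hjk)). tauto.
Qed.

Lemma L_bigand_box n f D :
  (forall B, In B D -> L X (Imp B (Box n (f B)))) ->
  L X (Imp (bigand D) (Box n (bigand (map f D)))).
Proof.
  induction D as [|B D IH]; simpl; intros HD.
  - apply (L_tautological [Box n Top]); [| simpl; auto | decide_tautology].
    simpl; intros P [<- | []]; apply L_box_top.
  - pose proof (L_wf _ (HD B (or_introl eq_refl))) as HwB.
    pose proof (L_wf _ (IH (fun C HC => HD C (or_intror HC)))) as HwD.
    simpl in HwB, HwD.
    apply (L_tautological [Imp B (Box n (f B));
                           Imp (bigand D) (Box n (bigand (map f D)));
                           Imp (And (Box n (f B)) (Box n (bigand (map f D))))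
                               (Box n (And (f B) (bigand (map f D))))]).
    + simpl; intros P [<- | [<- | [<- | []]]]; auto.
      apply L_box_and; simpl; tauto.
    + simpl; tauto.
    + decide_tautology.
Qed.

Variable t : bool.
Hypothesis X_T : t = true <-> X ST.
Variable n : nat.

Ltac collapse_tautology :=
  destruct t; (apply L_taut; [simpl in *; intuition auto using wf_collapse | decide_tautology]).

Lemma L_collapse_instance s A : X s -> wf A -> instance s A -> L X (collapse t n A).
Proof.
  intros Hs Hw Hinst.
  destruct s; simpl in Hinst.
  - destruct Hinst as (k & B & ->). simpl in *.
    destruct (Nat.leb_spec n k); destruct (Nat.leb_spec n (S k)); try lia.
    + collapse_tautology.
    + destruct t.
      * rewrite collapse_id by (apply (wf_Box_boxes_below k); [simpl; tauto | lia]).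
        apply L_ax with ST; [now apply X_T | simpl; tauto | simpl; eauto].
      * apply L_taut; [simpl; tauto | decide_tautology].
    + apply L_ax with SH; [assumption | simpl; tauto | simpl; eauto].
  - destruct Hinst as (k & B & C & ->). simpl in *.
    destruct (Nat.leb_spec n k).
    + collapse_tautology.
    + apply L_ax with SK; [assumption | simpl; tauto | simpl; eauto].
  - destruct Hinst as (k & B & ->). simpl in *.
    destruct (Nat.leb_spec n k); destruct (Nat.leb_spec n (S k)); try lia.
    + collapse_tautology.
    + collapse_tautology.
    + apply L_ax with S4; [assumption | simpl; tauto | simpl; eauto].
  - destruct Hinst as (k & B & ->). simpl in *.
    replace t with true by (symmetry; now apply X_T).
    destruct (Nat.leb_spec n k).
    + apply L_taut; [simpl; intuition auto using wf_collapse | decide_tautology].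
    + rewrite collapse_id by (apply (wf_Box_boxes_below k); [simpl; tauto | lia]).
      apply L_ax with ST; [assumption | simpl; tauto | simpl; eauto].
Qed.

Lemma L_collapse A : L X A -> L X (collapse t n A).
Proof.
  induction 1 as [A Hw Htaut | s A Hs Hw Hinst | A B _ IHA _ IHAB | k A HA IHA Hk].
  - apply L_taut; [now apply wf_collapse |].
    intro v; rewrite eval_collapse; apply Htaut.
  - exact (L_collapse_instance s A Hs Hw Hinst).
  - exact (L_mp _ _ _ IHA IHAB).
  - simpl. destruct (Nat.leb_spec n k).
    + destruct t; [assumption | apply L_taut; [exact I | decide_tautology]].
    + exact (L_nec _ k A HA Hk).
Qed.

Lemma L_premise_box m C : m <= n -> wf (Box m C) ->
  L X (Imp (Box m C) (Box n (collapse t n (Box m C)))).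
Proof.
  intros Hmn Hw. simpl. destruct (Nat.leb_spec n m).
  - replace m with n in * by lia. destruct t.
    + rewrite collapse_id by (simpl in Hw; tauto).
      apply L_taut; [simpl in *; tauto | decide_tautology].
    + apply (L_tautological [Box n Top]); [| simpl in *; tauto | decide_tautology].
      simpl; intros P [<- | []]; apply L_box_top.
  - assert (HwC : boxes_below (S m) C) by (apply (wf_Box_boxes_below m); [assumption | lia]).
    apply L_imp_trans with (Box (S m) (Box m C)).
    + apply L_ax with S4; [assumption | simpl in *; intuition lia | simpl; eauto].
    + apply L_box_index_mono; [lia | simpl in *; intuition lia].
Qed.

Lemma derives_box ps A :
  (forall p, In p ps -> wf (Box (fst p) (snd p))) -> wf (Box n A) ->
  (forall p, In p ps -> fst p <= n) ->
  derives (L X) (boxed_premises ps) A -> derives (L X) (boxed_premises ps) (Box n A).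
Proof.
  intros Hwf HwA Hle [D [HD HDA]]. exists D. split; [assumption |].
  assert (HcDA := L_collapse _ HDA). simpl in HcDA, HwA.
  rewrite collapse_bigand, collapse_id in HcDA by tauto.
  apply L_imp_trans with (Box n (bigand (map (collapse t n) D))).
  - apply L_bigand_box. intros B HB.
    apply HD, in_map_iff in HB. destruct HB as [[m C] [<- Hin]].
    exact (L_premise_box m C (Hle _ Hin) (Hwf _ Hin)).
  - apply L_box_mono; [assumption |]. split; [| tauto].
    rewrite <- collapse_bigand. apply collapse_boxes_below.
    pose proof (L_wf _ HDA) as HwDA. simpl in HwDA; tauto.
Qed.

End Derivations.

Theorem theorem3p9 (ps : list (nat * form)) (A : form) (n : nat) :
  (forall p, In p ps -> wf (Box (fst p) (snd p))) ->
  wf (Box n A) ->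
  (forall p, In p ps -> fst p <= n) ->
  (derives K4h (boxed_premises ps) A -> derives K4h (boxed_premises ps) (Box n A)) /\
  (derives S4h (boxed_premises ps) A -> derives S4h (boxed_premises ps) (Box n A)).
Proof.
  intros Hwf HwA Hle. split.
  - apply (derives_box K4h_schemes) with (t := false); unfold K4h_schemes; auto.
    split; [discriminate | intros [H | [H | H]]; discriminate].
  - apply (derives_box S4h_schemes) with (t := true); unfold S4h_schemes; auto.
    split; auto.
Qed.
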